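(* Let $H$ be the system defined in the context, and suppose the underlying graph is complete on $N\ge 2$ nodes (every pair $i\neq k$ joined by an edge with susceptance $b_{ik}>0$). Let $\underline{b}$ be the arithmetic mean of the $N(N-1)/2$ edge susceptances and $b_{\min}=\min_{i\ne k}b_{ik}$. Then $$\frac{\alpha}{2}(N-1)\left(\frac{1}{k_P}+\frac{1}{\tau_Q\left(\frac{c_Q}{Nb_{\min}}+k_Q\right)}\right)\ \le\ \|H\|_2^2\ \le\ \frac{\alpha}{2}(N-1)\left(\frac{1}{k_P}+\frac{1}{\tau_Q\left(\frac{c_Q}{N\underline{b}}+k_Q\right)}\right),$$ and if all $b_{ik}$ are equal both inequalities are equalities.
   Context: $L_B$ is the weighted Laplacian of the graph with edge weights $b_{ik}$. Parameters: $k_P,\tau_P,k_Q,\tau_Q>0$, $\bar b\ge 0$, $c_Q=1+2k_Q\bar b$, $\alpha>0$. $H$ is the LTI system with state $\psi=(\delta,\omega,V)\in\mathbb{R}^{3N}$, input $\mathrm{w}\in\mathbb{R}^{2N}$, output $y$: $$\dot\psi=\begin{bmatrix}0 & I & 0\\ -\frac{k_P}{\tau_P}L_B & -\frac{1}{\tau_P}I & 0\\ 0 & 0 & -\frac{c_Q}{\tau_Q}I-\frac{k_Q}{\tau_Q}L_B\end{bmatrix}\psi+\begin{bmatrix}0&0\\ \frac{1}{\tau_P}I & 0\\ 0 & \frac{1}{\tau_Q}I\end{bmatrix}\mathrm{w},\qquad y=\begin{bmatrix}\sqrt{\alpha}L_B^{1/2} & 0 & 0\\ 0&0&\sqrt{\alpha}L_B^{1/2}\end{bmatrix}\psi,$$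 and $\|H\|_2^2$ is the squared $\mathcal{H}_2$ norm of its transfer function (finite since the single zero mode is unobservable and all other modes are stable). *)

From Stdlib Require Export Reals List Arith.
Export ListNotations.
Open Scope R_scope.

Definition fsum (n : nat) (f : nat -> R) : R :=
  fold_right Rplus 0 (map f (seq 0 n)).

(* Matrices are functions nat -> nat -> R; dimensions are tracked explicitly. *)
Definition mat := nat -> nat -> R.

Definition idm (i j : nat) : R := if Nat.eqb i j then 1 else 0.

(* Weighted Laplacian (N x N) of the graph with edge weights b i k, i <> k
   (the diagonal values b i i are ignored). *)
Definition lap (N : nat) (b : mat) : mat := fun i k =>
  if Nat.eqb i k then fsum N (fun j => if Nat.eqb j i then 0 else b i j)
  else - b i k.

Definition pairs (N : nat) : list (nat * nat) :=
  filter (fun p => Nat.ltb (fst p) (snd p)) (list_prod (seq 0 N) (seq 0 N)).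

Definition edge_weights (N : nat) (b : mat) : list R :=
  map (fun p => b (fst p) (snd p)) (pairs N).

Definition bmin (N : nat) (b : mat) : R :=
  match edge_weights N b with
  | [] => 0
  | x :: l => fold_right Rmin x l
  end.

Definition bmean (N : nat) (b : mat) : R :=
  fold_right Rplus 0 (edge_weights N b) / (INR N * (INR N - 1) / 2).

(* State psi = (delta, omega, V): indices 0..N-1, N..2N-1, 2N..3N-1.
   Input w = (w_P, w_Q): indices 0..N-1, N..2N-1.
   Output y: indices 0..N-1 (delta part), N..2N-1 (V part). *)
Definition Asys (N : nat) (b : mat) (kP tauP kQ tauQ cQ : R) : mat := fun i j =>
  let L := lap N b in
  let ri := Nat.modulo i N in let rj := Nat.modulo j N in
  match Nat.div i N, Nat.div j N with
  | 0%nat, 1%nat => idm ri rj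
  | 1%nat, 0%nat => - (kP / tauP) * L ri rj
  | 1%nat, 1%nat => - (1 / tauP) * idm ri rj
  | 2%nat, 2%nat => - (cQ / tauQ) * idm ri rj - (kQ / tauQ) * L ri rj
  | _, _ => 0
  end.

Definition Bsys (N : nat) (tauP tauQ : R) : mat := fun i j =>
  let ri := Nat.modulo i N in let rj := Nat.modulo j N in
  match Nat.div i N, Nat.div j N with
  | 1%nat, 0%nat => (1 / tauP) * idm ri rj
  | 2%nat, 1%nat => (1 / tauQ) * idm ri rj
  | _, _ => 0
  end.

(* S plays the role of L_B^{1/2}. *)
Definition Csys (N : nat) (alpha : R) (S : mat) : mat := fun i j =>
  let ri := Nat.modulo i N in let rj := Nat.modulo j N in
  match Nat.div i N, Nat.div j N with
  | 0%nat, 0%nat => sqrt alpha * S ri rj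
  | 1%nat, 2%nat => sqrt alpha * S ri rj
  | _, _ => 0
  end.

Definition is_psd_sqrt (n : nat) (S M : mat) : Prop :=
  (forall i j, (i < n)%nat -> (j < n)%nat -> S i j = S j i) /\
  (forall x : nat -> R, 0 <= fsum n (fun i => fsum n (fun j => x i * S i j * x j))) /\
  (forall i j, (i < n)%nat -> (j < n)%nat -> fsum n (fun k => S i k * S k j) = M i j).

(* Phi is the state-transition matrix exp(A t) (n x n): Phi 0 = I, Phi' = A Phi. *)
Definition is_transition (n : nat) (A : mat) (Phi : R -> mat) : Prop :=
  (forall i j, (i < n)%nat -> (j < n)%nat -> Phi 0 i j = idm i j) /\
  (forall t i j, (i < n)%nat -> (j < n)%nat ->
     derivable_pt_lim (fun s => Phi s i j) t (fsum n (fun k => A i k * Phi t k j))).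

Definition impulse (n : nat) (C : mat) (Phi : R -> mat) (B : mat) (t : R) : mat :=
  fun i j => fsum n (fun k => fsum n (fun l => C i k * Phi t k l * B l j)).

Definition has_integral_0_inf (g : R -> R) (v : R) : Prop :=
  forall eps, 0 < eps -> exists M, forall T, M <= T ->
    exists pr : Riemann_integrable g 0 T, Rabs (RiemannInt pr - v) < eps.

Definition H2_norm_sq (n m p : nat) (A B C : mat) (Phi : R -> mat) (v : R) : Prop :=
  has_integral_0_inf
    (fun t => fsum p (fun i => fsum m (fun j => (impulse n C Phi B t i j) ^ 2))) v.

From Stdlib Require Import Reals Lra Lia Psatz FunctionalExtensionality Classical.
From Coquelicot Require Import Coquelicot.
Open Scope R_scope.

(* Each column of the impulse response splits into a swing part [(delta, omega)],
   a damped oscillator [delta'' = -(kP/tauP) L delta - delta'/tauP], and a voltage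
   part [V' = -(p + r L) V] with [p = cQ/tauQ], [r = kQ/tauQ]; the squared H2 norm
   is [alpha] times the integral of [delta^T L delta + V^T L V] over all columns.
   Instead of diagonalising [L], each contribution is bounded by a quadratic
   Lyapunov function [U] with [U' <= - integrand] (upper bound [U(0)]) or
   [U' >= - integrand] and [U -> 0] (lower bound [U(0)]).  For the swing part the
   solution of the Lyapunov equation gives the exact value [alpha (N-1) / (2 kP)].
   For the voltage part an eigenmode [lambda] costs [alpha lambda / (2 tauQ^2 (p + r lambda))],
   a concave increasing function of [lambda]: it lies below its tangent at the mean
   nonzero eigenvalue [tr L / (N-1) = N bmean] and above its value at the spectral
   gap, which for a complete graph is at least [N bmin].  Equal weights make
   [bmin = bmean]. *)

Lemma fold_right_Rplus_init (a : R) (l : list R) :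
  fold_right Rplus a l = a + fold_right Rplus 0 l.
Proof. induction l as [|x l IH]; simpl; [lra | rewrite IH; lra]. Qed.

Lemma fsum_S n f : fsum (S n) f = fsum n f + f n.
Proof.
  unfold fsum. rewrite seq_S, map_app, fold_right_app. simpl.
  rewrite fold_right_Rplus_init. lra.
Qed.

Lemma fsum_ext n f g : (forall i, (i < n)%nat -> f i = g i) -> fsum n f = fsum n g.
Proof.
  induction n as [|n IH]; intros Hfg; [reflexivity|].
  rewrite !fsum_S, IH, Hfg; auto with arith.
Qed.

Lemma fsum_plus n f g : fsum n (fun i => f i + g i) = fsum n f + fsum n g.
Proof. induction n; [cbn; lra|]. rewrite !fsum_S, IHn. lra. Qed.

Lemma fsum_scal n c f : fsum n (fun i => c * f i) = c * fsum n f.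
Proof. induction n; [cbn; lra|]. rewrite !fsum_S, IHn. lra. Qed.

Lemma fsum_opp n f : fsum n (fun i => - f i) = - fsum n f.
Proof. induction n; [cbn; lra|]. rewrite !fsum_S, IHn. lra. Qed.

Lemma fsum_minus n f g : fsum n (fun i => f i - g i) = fsum n f - fsum n g.
Proof. induction n; [cbn; lra|]. rewrite !fsum_S, IHn. lra. Qed.

Lemma fsum_const n c : fsum n (fun _ => c) = INR n * c.
Proof. induction n; [cbn; lra|]. rewrite !fsum_S, IHn, S_INR. lra. Qed.

Lemma fsum_zero n : fsum n (fun _ => 0) = 0.
Proof. rewrite fsum_const. lra. Qed.

Lemma fsum_le n f g : (forall i, (i < n)%nat -> f i <= g i) -> fsum n f <= fsum n g.
Proof.
  induction n as [|n IH]; intros Hfg; [cbn; lra|].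
  rewrite !fsum_S. pose proof (Hfg n (Nat.lt_succ_diag_r n)).
  enough (fsum n f <= fsum n g) by lra. apply IH. auto with arith.
Qed.

Lemma fsum_nonneg n f : (forall i, (i < n)%nat -> 0 <= f i) -> 0 <= fsum n f.
Proof. intros Hf. rewrite <- (fsum_zero n). apply fsum_le. exact Hf. Qed.

Lemma fsum_swap n m (f : nat -> nat -> R) :
  fsum n (fun i => fsum m (f i)) = fsum m (fun j => fsum n (fun i => f i j)).
Proof.
  induction n as [|n IH]; [symmetry; apply fsum_zero|].
  rewrite fsum_S, IH, <- fsum_plus. apply fsum_ext. intros. now rewrite fsum_S.
Qed.

Lemma fsum_add n m f : fsum (n + m) f = fsum n f + fsum m (fun i => f (n + i)%nat).
Proof.
  induction m as [|m IH]; [rewrite Nat.add_0_r; cbn; lra|].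
  rewrite Nat.add_succ_r, !fsum_S, IH. lra.
Qed.

Lemma fsum_eqb n k f : (k < n)%nat ->
  fsum n (fun l => if Nat.eqb k l then f l else 0) = f k.
Proof.
  induction n as [|n IH]; intros Hk; [lia|]. rewrite fsum_S.
  destruct (Nat.eq_dec k n) as [->|Hkn].
  - rewrite Nat.eqb_refl, (fsum_ext _ _ (fun _ => 0)), fsum_zero; [lra|].
    intros i Hi. destruct (Nat.eqb_spec n i); [lia | reflexivity].
  - rewrite IH by lia. destruct (Nat.eqb_spec k n); [lia | lra].
Qed.

Lemma fsum_idm_l n k f : (k < n)%nat -> fsum n (fun l => idm k l * f l) = f k.
Proof.
  intros Hk. rewrite <- (fsum_eqb n k f Hk). apply fsum_ext. intros l _.
  unfold idm. destruct (Nat.eqb k l); ring.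
Qed.

Lemma fsum_idm_r n k f : (k < n)%nat -> fsum n (fun l => f l * idm l k) = f k.
Proof.
  intros Hk. rewrite <- (fsum_idm_l n k f Hk). apply fsum_ext. intros l _.
  unfold idm. rewrite Nat.eqb_sym. ring.
Qed.

Lemma fsum_mul n m f g :
  fsum n f * fsum m g = fsum n (fun i => fsum m (fun j => f i * g j)).
Proof.
  rewrite Rmult_comm, <- fsum_scal. apply fsum_ext. intros.
  rewrite Rmult_comm, <- fsum_scal. apply fsum_ext. intros. ring.
Qed.

Lemma fsum_blocks2 N f :
  fsum (2 * N) f = fsum N f + fsum N (fun r => f (N + r)%nat).
Proof. replace (2 * N)%nat with (N + N)%nat by lia. apply fsum_add. Qed.

Lemma fsum_blocks3 N f : fsum (3 * N) f =
  fsum N f + fsum N (fun r => f (N + r)%nat) + fsum N (fun r => f (2 * N + r)%nat).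
Proof.
  replace (3 * N)%nat with (N + N + N)%nat by lia. rewrite !fsum_add.
  f_equal. apply fsum_ext. intros. f_equal. lia.
Qed.

(** * Real analysis on [[0, +oo)] *)

Lemma derivable_pt_lim_eq f x l1 l2 :
  derivable_pt_lim f x l1 -> l1 = l2 -> derivable_pt_lim f x l2.
Proof. now intros Hf <-. Qed.

Lemma fsum_derive n (f : R -> nat -> R) (df : nat -> R) t :
  (forall i, (i < n)%nat -> derivable_pt_lim (fun s => f s i) t (df i)) ->
  derivable_pt_lim (fun s => fsum n (f s)) t (fsum n df).
Proof.
  induction n as [|n IH]; intros Hf; [apply derivable_pt_lim_const|].
  rewrite fsum_S.
  apply (derivable_pt_lim_ext (fun s => fsum n (f s) + f s n)).
  { intros. now rewrite fsum_S. }
  apply derivable_pt_lim_plus; [apply IH; auto | apply Hf]; lia.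
Qed.

Lemma increment_le_of_derive_le f g df dg :
  (forall t, derivable_pt_lim f t (df t)) -> (forall t, derivable_pt_lim g t (dg t)) ->
  (forall t, 0 <= t -> df t <= dg t) ->
  forall s T, 0 <= s <= T -> f T - f s <= g T - g s.
Proof.
  intros Hf Hg Hle s T [Hs HsT].
  set (h := fun t => f t - g t).
  assert (Hh : forall t, derivable_pt_lim h t (df t - dg t)).
  { intros. apply derivable_pt_lim_minus; auto. }
  destruct (MVT_gen h s T (fun t => df t - dg t)) as [x [Hx E]].
  - intros. apply is_derive_Reals, Hh.
  - intros. apply derivable_continuous_pt. eexists. apply Hh.
  - rewrite Rmin_left, Rmax_right in Hx by lra.
    assert ((df x - dg x) * (T - s) <= 0).
    { apply Rmult_le_0_r; [pose proof (Hle x ltac:(lra)) |]; lra. }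
    unfold h in E. lra.
Qed.

Lemma gronwall_exp f df k :
  (forall t, derivable_pt_lim f t (df t)) -> (forall t, 0 <= t -> df t <= - k * f t) ->
  forall T, 0 <= T -> f T <= f 0 * exp (- k * T).
Proof.
  intros Hf Hle T HT.
  set (h := fun s => f s * exp (k * s)).
  assert (Hh : forall t, derivable_pt_lim h t ((df t + k * f t) * exp (k * t))).
  { intros t. unfold h. eapply derivable_pt_lim_eq.
    - apply derivable_pt_lim_mult; [apply Hf|].
      apply (derivable_pt_lim_comp (fun s => k * s) exp t k).
      + apply (derivable_pt_lim_eq _ _ (k * 1));
          [apply derivable_pt_lim_scal, derivable_pt_lim_id | ring].
      + apply derivable_pt_lim_exp.
    - cbv beta. ring. }
  assert (Hdecr : h T - h 0 <= 0 - 0).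
  { apply (increment_le_of_derive_le h (fun _ => 0)
             (fun t => (df t + k * f t) * exp (k * t)) (fun _ => 0)); auto; try lra.
    - intros. apply derivable_pt_lim_const.
    - intros t Ht. apply Rmult_le_0_r; [pose proof (Hle t Ht); lra | apply Rlt_le, exp_pos]. }
  unfold h in Hdecr. rewrite Rmult_0_r, exp_0, Rmult_1_r in Hdecr.
  replace (f T) with (f T * exp (k * T) * exp (- k * T)).
  - apply Rmult_le_compat_r; [apply Rlt_le, exp_pos | lra].
  - rewrite Rmult_assoc, <- exp_plus. replace (k * T + - k * T) with 0 by ring.
    rewrite exp_0. ring.
Qed.

Definition eventually_small (f : R -> R) : Prop :=
  forall eps, 0 < eps -> exists T0, forall T, T0 <= T -> f T < eps.

Lemma eventually_small_exp C k : 0 < k -> eventually_small (fun T => C * exp (- k * T)).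
Proof.
  intros Hk eps Heps.
  destruct (Rle_lt_dec C 0) as [HC|HC].
  { exists 0. intros T _. pose proof (exp_pos (- k * T)). nra. }
  exists (C / (k * eps)). intros T HT.
  assert (HT0 : 0 < T) by (eapply Rlt_le_trans; [|exact HT]; apply Rdiv_lt_0_compat; nra).
  assert (HkT : C <= eps * (k * T)).
  { apply (Rmult_le_compat_l (k * eps)) in HT; [|nra].
    unfold Rdiv in HT. rewrite Rmult_comm, Rmult_assoc, Rinv_l, Rmult_1_r in HT by nra. nra. }
  pose proof (exp_ineq1 (k * T) ltac:(nra)) as Hexp.
  replace (- k * T) with (- (k * T)) by ring. rewrite exp_Ropp.
  apply (Rmult_lt_reg_r (exp (k * T))); [apply exp_pos|].
  rewrite Rmult_assoc, Rinv_l by (apply Rgt_not_eq, exp_pos). nra.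
Qed.

Lemma eventually_small_le f g :
  (forall T, 0 <= T -> f T <= g T) -> eventually_small g -> eventually_small f.
Proof.
  intros Hfg Hg eps Heps. destruct (Hg eps Heps) as [T0 H0].
  exists (Rmax T0 0). intros T HT.
  pose proof (Rmax_l T0 0). pose proof (Rmax_r T0 0).
  pose proof (Hfg T ltac:(lra)). pose proof (H0 T ltac:(lra)). lra.
Qed.

Lemma eventually_small_plus f g :
  eventually_small f -> eventually_small g -> eventually_small (fun T => f T + g T).
Proof.
  intros Hf Hg eps Heps.
  destruct (Hf (eps / 2) ltac:(lra)) as [T1 H1]. destruct (Hg (eps / 2) ltac:(lra)) as [T2 H2].
  exists (Rmax T1 T2). intros T HT.
  pose proof (Rmax_l T1 T2). pose proof (Rmax_r T1 T2).
  pose proof (H1 T ltac:(lra)). pose proof (H2 T ltac:(lra)). lra.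
Qed.

Lemma eventually_small_fsum n (f : nat -> R -> R) :
  (forall j, (j < n)%nat -> eventually_small (f j)) ->
  eventually_small (fun T => fsum n (fun j => f j T)).
Proof.
  induction n as [|n IH]; intros Hf.
  - intros eps Heps. exists 0. intros. cbn. exact Heps.
  - apply (eventually_small_le _ (fun T => fsum n (fun j => f j T) + f n T)).
    + intros. rewrite fsum_S. lra.
    + apply eventually_small_plus; [apply IH; auto | apply Hf; lia].
Qed.

Section IntegralBounds.
Variable g : R -> R.
Hypothesis g_cont : forall t, continuity_pt g t.
Hypothesis g_ge0 : forall t, 0 <= g t.

Lemma RInt_derive t : derivable_pt_lim (fun T => RInt g 0 T) t (g t).
Proof.
  apply is_derive_Reals, (is_derive_RInt g (fun T => RInt g 0 T) 0 t).
  - apply filter_forall. intros. apply (@RInt_correct R_CompleteNormedModule).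
    apply (@ex_RInt_continuous R_CompleteNormedModule). intros.
    apply continuity_pt_filterlim, g_cont.
  - apply continuity_pt_filterlim, g_cont.
Qed.

Lemma RInt_0_0 : RInt g 0 0 = 0.
Proof. apply (@RInt_point R_CompleteNormedModule). Qed.

Lemma RInt_0_monotone T1 T2 : 0 <= T1 <= T2 -> RInt g 0 T1 <= RInt g 0 T2.
Proof.
  intros HT.
  pose proof (increment_le_of_derive_le (fun _ => 0) (fun T => RInt g 0 T) (fun _ => 0) g
    (fun t => derivable_pt_lim_const 0 t) RInt_derive (fun t _ => g_ge0 t) T1 T2 HT).
  lra.
Qed.

Lemma RInt_le_of_lyapunov U dU T :
  (forall t, derivable_pt_lim U t (dU t)) -> (forall t, 0 <= t -> dU t <= - g t) ->
  0 <= T -> RInt g 0 T <= U 0 - U T.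
Proof.
  intros HU Hle HT.
  assert (H : RInt g 0 T - RInt g 0 0 <= - U T - - U 0).
  { apply (increment_le_of_derive_le (fun T => RInt g 0 T) (fun t => - U t) g (fun t => - dU t));
      try lra.
    - exact RInt_derive.
    - intros. apply derivable_pt_lim_opp, HU.
    - intros t Ht. pose proof (Hle t Ht). lra. }
  rewrite RInt_0_0 in H. lra.
Qed.

Lemma RInt_ge_of_lyapunov W dW T :
  (forall t, derivable_pt_lim W t (dW t)) -> (forall t, 0 <= t -> - g t <= dW t) ->
  0 <= T -> W 0 - W T <= RInt g 0 T.
Proof.
  intros HW Hle HT.
  assert (H : - W T - - W 0 <= RInt g 0 T - RInt g 0 0).
  { apply (increment_le_of_derive_le (fun t => - W t) (fun T => RInt g 0 T) (fun t => - dW t) g);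
      try lra.
    - intros. apply derivable_pt_lim_opp, HW.
    - exact RInt_derive.
    - intros t Ht. pose proof (Hle t Ht). lra. }
  rewrite RInt_0_0 in H. lra.
Qed.

Lemma has_integral_0_inf_sup M :
  (forall T, 0 <= T -> RInt g 0 T <= M) ->
  exists v, has_integral_0_inf g v /\ (forall T, 0 <= T -> RInt g 0 T <= v) /\ v <= M.
Proof.
  intros HM.
  set (E := fun y => exists T, 0 <= T /\ y = RInt g 0 T).
  destruct (completeness E) as [v [Hub Hlub]].
  - exists M. intros y [T [HT ->]]. auto.
  - exists (RInt g 0 0), 0. split; [lra | reflexivity].
  - assert (Hle : forall T, 0 <= T -> RInt g 0 T <= v) by (intros T HT; apply Hub; now exists T).
    exists v. repeat split; auto.
    + intros eps Heps.
      assert (Hnear : exists T0, 0 <= T0 /\ v - eps < RInt g 0 T0).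
      { apply NNPP. intros Hno. enough (v <= v - eps) by lra.
        apply Hlub. intros y [T [HT ->]]. apply Rnot_lt_le. intros Hlt. apply Hno. eauto. }
      destruct Hnear as [T0 [HT0 Hnear]]. exists T0. intros T HT.
      exists (continuity_implies_RiemannInt (Rle_trans _ _ _ HT0 HT) (fun x _ => g_cont x)).
      rewrite <- RInt_Reals. pose proof (RInt_0_monotone T0 T ltac:(lra)).
      pose proof (Hle T ltac:(lra)). apply Rabs_def1; lra.
    + apply Hlub. intros y [T [HT ->]]. auto.
Qed.

Lemma improper_integral_sandwich U dU W dW :
  (forall t, derivable_pt_lim U t (dU t)) -> (forall t, 0 <= t -> dU t <= - g t) ->
  (forall t, 0 <= t -> 0 <= U t) ->
  (forall t, derivable_pt_lim W t (dW t)) -> (forall t, 0 <= t -> - g t <= dW t) ->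
  eventually_small W ->
  exists v, has_integral_0_inf g v /\ W 0 <= v <= U 0.
Proof.
  intros HU HdU HU0 HW HdW HWsmall.
  destruct (has_integral_0_inf_sup (U 0)) as [v [Hv [Hle HvU]]].
  { intros T HT. pose proof (RInt_le_of_lyapunov U dU T HU HdU HT). pose proof (HU0 T HT). lra. }
  exists v. repeat split; auto.
  apply Rnot_lt_le. intros Hlt.
  destruct (HWsmall (W 0 - v) ltac:(lra)) as [T0 HT0].
  assert (HT : 0 <= Rmax T0 0) by apply Rmax_r.
  pose proof (HT0 _ (Rmax_l T0 0)).
  pose proof (RInt_ge_of_lyapunov W dW _ HW HdW HT).
  pose proof (Hle _ HT). lra.
Qed.

End IntegralBounds.

(** * Quadratic forms on [R^N] *)

Section Vectors.
Variable N : nat.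
Hypothesis HN : (1 <= N)%nat.

Definition dot (u w : nat -> R) := fsum N (fun i => u i * w i).
Definition vsum (u : nat -> R) := fsum N u.
Definition mxv (L : mat) (u : nat -> R) (i : nat) := fsum N (fun k => L i k * u k).
Definition bilin (L : mat) (u w : nat -> R) := dot u (mxv L w).

(* [cdot u w] is [u^T P w] for the projection [P = I - 1 1^T / N] onto the
   orthogonal complement of the consensus direction. *)
Definition cdot (u w : nat -> R) := dot u w - vsum u * vsum w / INR N.

Lemma INR_N_gt0 : 0 < INR N.
Proof. apply lt_0_INR. lia. Qed.

Lemma dot_ext u u' w w' : (forall i, (i < N)%nat -> u i = u' i) ->
  (forall i, (i < N)%nat -> w i = w' i) -> dot u w = dot u' w'.
Proof. intros Hu Hw. apply fsum_ext. intros. now rewrite Hu, Hw. Qed.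

Lemma cdot_ext u u' w w' : (forall i, (i < N)%nat -> u i = u' i) ->
  (forall i, (i < N)%nat -> w i = w' i) -> cdot u w = cdot u' w'.
Proof.
  intros Hu Hw. unfold cdot, vsum.
  rewrite (dot_ext u u' w w'), (fsum_ext N u u'), (fsum_ext N w w'); auto.
Qed.

Lemma bilin_ext L u u' w w' : (forall i, (i < N)%nat -> u i = u' i) ->
  (forall i, (i < N)%nat -> w i = w' i) -> bilin L u w = bilin L u' w'.
Proof.
  intros Hu Hw. apply dot_ext; auto. intros i _. apply fsum_ext. intros. now rewrite Hw.
Qed.

Lemma dot_sym u w : dot u w = dot w u.
Proof. apply fsum_ext. intros. ring. Qed.

Lemma cdot_sym u w : cdot u w = cdot w u.
Proof. unfold cdot. rewrite dot_sym, (Rmult_comm (vsum u)). reflexivity. Qed.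

Lemma dot_linr u s x t y :
  dot u (fun i => s * x i + t * y i) = s * dot u x + t * dot u y.
Proof. unfold dot. rewrite <- !fsum_scal, <- fsum_plus. apply fsum_ext. intros. ring. Qed.

Lemma vsum_lin s x t y : vsum (fun i => s * x i + t * y i) = s * vsum x + t * vsum y.
Proof. unfold vsum. rewrite <- !fsum_scal, <- fsum_plus. apply fsum_ext. intros. ring. Qed.

Lemma mxv_lin L s x t y i :
  mxv L (fun k => s * x k + t * y k) i = s * mxv L x i + t * mxv L y i.
Proof. unfold mxv. rewrite <- !fsum_scal, <- fsum_plus. apply fsum_ext. intros. ring. Qed.

Lemma cdot_linr u s x t y :
  cdot u (fun i => s * x i + t * y i) = s * cdot u x + t * cdot u y.
Proof. unfold cdot. rewrite dot_linr, vsum_lin. unfold Rdiv. ring. Qed.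

Lemma bilin_linr L u s x t y :
  bilin L u (fun i => s * x i + t * y i) = s * bilin L u x + t * bilin L u y.
Proof.
  unfold bilin. rewrite <- dot_linr. apply dot_ext; auto. intros. apply mxv_lin.
Qed.

Lemma cdot_0l u w : (forall i, (i < N)%nat -> u i = 0) -> cdot u w = 0.
Proof.
  intros Hu. unfold cdot, dot, vsum.
  rewrite (fsum_ext N u (fun _ => 0)), (fsum_ext N _ (fun _ => 0)), fsum_zero by
    (intros; rewrite Hu; auto; ring).
  lra.
Qed.

Lemma bilin_0l L u w : (forall i, (i < N)%nat -> u i = 0) -> bilin L u w = 0.
Proof.
  intros Hu. unfold bilin, dot. rewrite <- (fsum_zero N). apply fsum_ext. intros.
  rewrite Hu; auto. ring.
Qed.

Lemma cdot_centered u w :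
  cdot u w = fsum N (fun i => (u i - vsum u / INR N) * (w i - vsum w / INR N)).
Proof.
  pose proof INR_N_gt0.
  transitivity (fsum N (fun i => u i * w i) + (- (vsum w / INR N)) * fsum N u
     + (- (vsum u / INR N)) * fsum N w + fsum N (fun _ => vsum u / INR N * (vsum w / INR N))).
  - rewrite fsum_const. unfold cdot, dot. fold (vsum u) (vsum w). field. lra.
  - rewrite <- !fsum_scal, <- !fsum_plus. apply fsum_ext. intros. ring.
Qed.

Lemma cdot_self_ge0 u : 0 <= cdot u u.
Proof. rewrite cdot_centered. apply fsum_nonneg. intros. apply Rle_0_sqr. Qed.

Lemma cdot_scall s u w : cdot (fun i => s * u i) w = s * cdot u w.
Proof.
  rewrite cdot_sym, (cdot_ext w w _ (fun i => s * u i + 0 * u i)), cdot_linr, cdot_sym;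
    [ring | reflexivity | intros; ring].
Qed.

Lemma cdot_scalr s u w : cdot u (fun i => s * w i) = s * cdot u w.
Proof. now rewrite cdot_sym, cdot_scall, cdot_sym. Qed.

Lemma cdot_addr u x y : cdot u (fun i => x i + y i) = cdot u x + cdot u y.
Proof.
  rewrite (cdot_ext u u _ (fun i => 1 * x i + 1 * y i)), cdot_linr by (intros; ring). ring.
Qed.

Lemma cdot_add_self u w :
  cdot (fun i => u i + w i) (fun i => u i + w i) = cdot u u + 2 * cdot u w + cdot w w.
Proof.
  set (v := fun i => 1 * u i + 1 * w i).
  rewrite (cdot_ext _ v _ v) by (intros; unfold v; ring). unfold v.
  rewrite cdot_linr, !(cdot_sym (fun i => 1 * u i + 1 * w i)), !cdot_linr, (cdot_sym w u).
  ring.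
Qed.

Lemma cdot_add_self_le u w :
  cdot (fun i => u i + w i) (fun i => u i + w i) <= 2 * cdot u u + 2 * cdot w w.
Proof.
  pose proof (cdot_self_ge0 (fun i => u i + - 1 * w i)) as Hdiff.
  rewrite cdot_add_self, !cdot_scall, !cdot_scalr in Hdiff.
  rewrite cdot_add_self. lra.
Qed.

Lemma cdot_unit s j : (j < N)%nat ->
  cdot (fun i => s * idm i j) (fun i => s * idm i j) = s ^ 2 * (1 - 1 / INR N).
Proof.
  intros Hj. unfold cdot, dot, vsum.
  rewrite (fsum_ext N _ (fun i => s ^ 2 * idm i j)), fsum_scal, !fsum_scal.
  - rewrite !(fsum_ext N (fun i => idm i j) (fun i => 1 * idm i j)) by (intros; ring).
    rewrite fsum_idm_r by exact Hj. unfold Rdiv. ring.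
  - intros i _. unfold idm. destruct (Nat.eqb i j); ring.
Qed.

Lemma bilin_unit L s j : (j < N)%nat ->
  bilin L (fun i => s * idm i j) (fun i => s * idm i j) = s ^ 2 * L j j.
Proof.
  intros Hj. unfold bilin, dot, mxv.
  transitivity (fsum N (fun i => (s ^ 2 * L i j) * idm i j)).
  - apply fsum_ext. intros i _.
    rewrite (fsum_ext N _ (fun k => (s * L i k) * idm k j)) by (intros; ring).
    rewrite fsum_idm_r by exact Hj. ring.
  - apply fsum_idm_r, Hj.
Qed.

Lemma sum_sq_diff u :
  fsum N (fun i => fsum N (fun k => (u i - u k) ^ 2)) = 2 * INR N * cdot u u.
Proof.
  pose proof INR_N_gt0.
  transitivity (fsum N (fun i => INR N * (u i * u i) + (-2 * vsum u) * u i + dot u u)).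
  - apply fsum_ext. intros i _.
    rewrite (fsum_ext N _ (fun k => u i * u i + (-2 * u i) * u k + u k * u k)) by (intros; ring).
    rewrite !fsum_plus, fsum_const, fsum_scal. unfold dot, vsum. ring.
  - rewrite !fsum_plus, !fsum_scal, fsum_const. unfold cdot, dot, vsum. field. lra.
Qed.

Lemma sum_sq_mxv_sqrt (S L : mat) u :
  (forall i j, (i < N)%nat -> (j < N)%nat -> S i j = S j i) ->
  (forall i j, (i < N)%nat -> (j < N)%nat -> fsum N (fun k => S i k * S k j) = L i j) ->
  fsum N (fun i => mxv S u i ^ 2) = bilin L u u.
Proof.
  intros Ssym Ssq.
  transitivity (fsum N (fun i => fsum N (fun r => fsum N (fun s => u r * (S r i * S i s) * u s)))).
  - apply fsum_ext. intros i Hi. unfold mxv. rewrite <- Rsqr_pow2. unfold Rsqr. rewrite fsum_mul.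
    apply fsum_ext. intros r Hr. apply fsum_ext. intros s _. rewrite (Ssym r i) by auto. ring.
  - rewrite fsum_swap. unfold bilin, dot, mxv. apply fsum_ext. intros r Hr.
    rewrite fsum_swap, <- fsum_scal. apply fsum_ext. intros s Hs.
    rewrite <- Ssq by auto.
    rewrite (fsum_ext N _ (fun i => (u r * u s) * (S r i * S i s))) by (intros; ring).
    rewrite fsum_scal. ring.
Qed.

End Vectors.

(** * Weighted Laplacians *)

Definition offdiag (b : mat) (i k : nat) : R := if Nat.eqb k i then 0 else b i k.

Section Laplacian.
Variable N : nat.
Variable b : mat.
Hypothesis HN : (1 <= N)%nat.
Hypothesis bsym : forall i k, (i < N)%nat -> (k < N)%nat -> b i k = b k i.

Lemma offdiag_sym i k : (i < N)%nat -> (k < N)%nat -> offdiag b i k = offdiag b k i.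
Proof.
  intros. unfold offdiag. destruct (Nat.eqb_spec k i), (Nat.eqb_spec i k); auto; lia.
Qed.

Lemma lap_sym i k : (i < N)%nat -> (k < N)%nat -> lap N b i k = lap N b k i.
Proof.
  intros. unfold lap. destruct (Nat.eqb_spec i k), (Nat.eqb_spec k i); try lia.
  - now subst.
  - now rewrite bsym.
Qed.

Lemma mxv_lap u i : (i < N)%nat ->
  mxv N (lap N b) u i = fsum N (fun k => offdiag b i k * (u i - u k)).
Proof.
  intros Hi. unfold mxv.
  transitivity (fsum N (fun k => if Nat.eqb i k then fsum N (offdiag b i) * u k else 0)
      + fsum N (fun k => - (offdiag b i k * u k))).
  - rewrite <- fsum_plus. apply fsum_ext. intros k _. unfold lap, offdiag.
    destruct (Nat.eqb_spec i k), (Nat.eqb_spec k i); try lia; try lra.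
  - rewrite fsum_eqb, fsum_opp by exact Hi.
    rewrite (fsum_ext N (fun k => offdiag b i k * (u i - u k))
               (fun k => u i * offdiag b i k + - (offdiag b i k * u k))) by (intros; ring).
    rewrite fsum_plus, fsum_opp, fsum_scal. ring.
Qed.

Lemma lap_row_sum0 i : (i < N)%nat -> fsum N (lap N b i) = 0.
Proof.
  intros Hi. transitivity (mxv N (lap N b) (fun _ => 1) i).
  - apply fsum_ext. intros. ring.
  - rewrite mxv_lap, <- (fsum_zero N) by exact Hi. apply fsum_ext. intros. ring.
Qed.

Lemma bilin_lap u : 2 * bilin N (lap N b) u u
  = fsum N (fun i => fsum N (fun k => offdiag b i k * (u i - u k) ^ 2)).
Proof.
  assert (E1 : bilin N (lap N b) u u
    = fsum N (fun i => fsum N (fun k => offdiag b i k * (u i * (u i - u k))))).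
  { apply fsum_ext. intros i Hi. rewrite mxv_lap, <- fsum_scal by exact Hi.
    apply fsum_ext. intros. ring. }
  assert (E2 : bilin N (lap N b) u u
    = fsum N (fun i => fsum N (fun k => offdiag b i k * (u k * (u k - u i))))).
  { rewrite E1, fsum_swap. apply fsum_ext. intros k Hk. apply fsum_ext. intros i Hi.
    now rewrite offdiag_sym. }
  replace (2 * bilin N (lap N b) u u) with (bilin N (lap N b) u u + bilin N (lap N b) u u)
    by ring.
  rewrite E1 at 1. rewrite E2, <- fsum_plus. apply fsum_ext. intros.
  rewrite <- fsum_plus. apply fsum_ext. intros. ring.
Qed.

Lemma bilin_lap_ge m u :
  (forall i k, (i < N)%nat -> (k < N)%nat -> i <> k -> m <= b i k) ->
  INR N * m * cdot N u u <= bilin N (lap N b) u u.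
Proof.
  intros Hm.
  assert (H : m * fsum N (fun i => fsum N (fun k => (u i - u k) ^ 2))
              <= 2 * bilin N (lap N b) u u).
  { rewrite bilin_lap, <- fsum_scal. apply fsum_le. intros i Hi.
    rewrite <- fsum_scal. apply fsum_le. intros k Hk. unfold offdiag.
    destruct (Nat.eqb_spec k i) as [->|].
    - rewrite Rminus_diag. simpl. lra.
    - apply Rmult_le_compat_r; [apply pow2_ge_0 | apply Hm; auto]. }
  rewrite sum_sq_diff in H by exact HN. lra.
Qed.

End Laplacian.

(** * Lyapunov functions of the swing and voltage dynamics *)

Section VectorDerivatives.
Variable N : nat.
Hypothesis HN : (1 <= N)%nat.
Variables u w : R -> nat -> R.
Variables du dw : nat -> R.
Variable t : R.
Hypothesis u_deriv : forall i, (i < N)%nat -> derivable_pt_lim (fun s => u s i) t (du i).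
Hypothesis w_deriv : forall i, (i < N)%nat -> derivable_pt_lim (fun s => w s i) t (dw i).

Lemma dot_derive :
  derivable_pt_lim (fun s => dot N (u s) (w s)) t (dot N du (w t) + dot N (u t) dw).
Proof.
  unfold dot. rewrite <- fsum_plus.
  apply (fsum_derive N (fun s i => u s i * w s i)). intros.
  apply derivable_pt_lim_mult; auto.
Qed.

Lemma cdot_derive :
  derivable_pt_lim (fun s => cdot N (u s) (w s)) t (cdot N du (w t) + cdot N (u t) dw).
Proof.
  pose proof (INR_N_gt0 N HN). unfold cdot, vsum.
  eapply derivable_pt_lim_eq.
  - apply derivable_pt_lim_minus; [apply dot_derive|].
    unfold Rdiv. apply (derivable_pt_lim_mult _ (fun _ => / INR N));
      [apply derivable_pt_lim_mult | apply derivable_pt_lim_const];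
      apply (fsum_derive N); auto.
  - cbv beta. field. lra.
Qed.

Lemma mxv_derive L i :
  derivable_pt_lim (fun s => mxv N L (w s) i) t (mxv N L dw i).
Proof.
  apply (fsum_derive N (fun s k => L i k * w s k)). intros.
  apply derivable_pt_lim_scal; auto.
Qed.

End VectorDerivatives.

Lemma bilin_derive N L (u w : R -> nat -> R) du dw t :
  (forall i, (i < N)%nat -> derivable_pt_lim (fun s => u s i) t (du i)) ->
  (forall i, (i < N)%nat -> derivable_pt_lim (fun s => w s i) t (dw i)) ->
  derivable_pt_lim (fun s => bilin N L (u s) (w s)) t
    (bilin N L du (w t) + bilin N L (u t) dw).
Proof.
  intros Hu Hw. apply (dot_derive N u (fun s => mxv N L (w s))); auto.
  intros. now apply mxv_derive.
Qed.

Section Dynamics.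
Variable N : nat.
Variable L : mat.
Variable nu : R.
Hypothesis HN : (1 <= N)%nat.
Hypothesis Lsym : forall i k, (i < N)%nat -> (k < N)%nat -> L i k = L k i.
Hypothesis Lrow : forall i, (i < N)%nat -> fsum N (L i) = 0.
Hypothesis Hnu : 0 < nu.
Hypothesis Lgap : forall u, nu * cdot N u u <= bilin N L u u.

Lemma bilin_self_ge0 u : 0 <= bilin N L u u.
Proof. pose proof (Lgap u). pose proof (cdot_self_ge0 N HN u). nra. Qed.

Lemma bilin_sym u w : bilin N L u w = bilin N L w u.
Proof.
  unfold bilin, dot, mxv.
  transitivity (fsum N (fun i => fsum N (fun k => u i * L i k * w k))).
  - apply fsum_ext. intros. rewrite <- fsum_scal. apply fsum_ext. intros. ring.
  - rewrite fsum_swap. apply fsum_ext. intros k Hk.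
    rewrite <- fsum_scal. apply fsum_ext. intros i Hi. rewrite (Lsym i k) by auto. ring.
Qed.

Lemma cdot_mxv u w : cdot N u (mxv N L w) = bilin N L u w.
Proof.
  assert (Hsum : vsum N (mxv N L w) = 0).
  { unfold vsum, mxv. rewrite fsum_swap, <- (fsum_zero N). apply fsum_ext. intros k Hk.
    transitivity (w k * fsum N (L k)).
    - rewrite <- fsum_scal. apply fsum_ext. intros i Hi. rewrite (Lsym i k) by auto. ring.
    - rewrite Lrow by auto. ring. }
  unfold cdot. rewrite Hsum. unfold bilin. lra.
Qed.

Lemma cdot_self_derive (v : R -> nat -> R) dv t :
  (forall i, (i < N)%nat -> derivable_pt_lim (fun s => v s i) t (dv i)) ->
  derivable_pt_lim (fun s => cdot N (v s) (v s)) t (2 * cdot N (v t) dv).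
Proof.
  intros Hv. eapply derivable_pt_lim_eq; [apply cdot_derive; auto|].
  rewrite cdot_sym. ring.
Qed.

Lemma bilin_self_derive (v : R -> nat -> R) dv t :
  (forall i, (i < N)%nat -> derivable_pt_lim (fun s => v s i) t (dv i)) ->
  derivable_pt_lim (fun s => bilin N L (v s) (v s)) t (2 * bilin N L (v t) dv).
Proof.
  intros Hv. eapply derivable_pt_lim_eq; [apply bilin_derive; auto|].
  rewrite bilin_sym. ring.
Qed.

Section Swing.
Variables alpha a c : R.
Hypothesis Halpha : 0 < alpha.
Hypothesis Ha : 0 < a.
Hypothesis Hc : 0 < c.
Variables d w : R -> nat -> R.
Hypothesis d_deriv : forall t i, (i < N)%nat -> derivable_pt_lim (fun s => d s i) t (w t i).
Hypothesis w_deriv : forall t i, (i < N)%nat ->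
  derivable_pt_lim (fun s => w s i) t (- a * mxv N L (d t) i + - c * w t i).

(* On the complement of the consensus direction, this is [z^T X z] for the
   solution [X] of the Lyapunov equation [A^T X + X A = -C^T C] of the
   damped oscillator [d'' = - a L d - c d'], whence [swing_cost_derive]. *)
Definition swing_cost (x y : nat -> R) : R :=
  alpha / (2 * a * c) * cdot N (fun i => c * x i + y i) (fun i => c * x i + y i)
  + alpha / (2 * c) * bilin N L x x.

Definition swing_energy (x y : nat -> R) : R := a * bilin N L x x + cdot N y y.

Lemma swing_cost_ge0 x y : 0 <= swing_cost x y.
Proof.
  unfold swing_cost. pose proof (bilin_self_ge0 x).
  pose proof (cdot_self_ge0 N HN (fun i => c * x i + y i)).
  apply Rplus_le_le_0_compat; apply Rmult_le_pos; auto; apply Rlt_le, Rdiv_lt_0_compat; nra.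
Qed.

Lemma swing_energy_ge0 x y : 0 <= swing_energy x y.
Proof.
  unfold swing_energy. pose proof (bilin_self_ge0 x). pose proof (cdot_self_ge0 N HN y). nra.
Qed.

Lemma swing_cost_derive t : derivable_pt_lim (fun s => swing_cost (d s) (w s)) t
  (- alpha * bilin N L (d t) (d t)).
Proof.
  unfold swing_cost. eapply derivable_pt_lim_eq.
  - apply derivable_pt_lim_plus; apply derivable_pt_lim_scal.
    + apply (cdot_self_derive (fun s i => c * d s i + w s i)
               (fun i => - a * mxv N L (d t) i)).
      intros i Hi. eapply derivable_pt_lim_eq.
      * apply derivable_pt_lim_plus; [apply derivable_pt_lim_scal|]; auto.
      * ring.
    + apply bilin_self_derive. auto.
  - rewrite cdot_scalr, cdot_sym, (cdot_addr _ _ (fun i => c * d t i) (w t)), cdot_scalr,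
      !(cdot_sym _ (mxv N L (d t))), !cdot_mxv, (bilin_sym (w t)).
    field. lra.
Qed.

Lemma swing_energy_derive t : derivable_pt_lim (fun s => swing_energy (d s) (w s)) t
  (- 2 * c * cdot N (w t) (w t)).
Proof.
  unfold swing_energy. eapply derivable_pt_lim_eq.
  - apply derivable_pt_lim_plus;
      [apply derivable_pt_lim_scal, bilin_self_derive
      | apply (cdot_self_derive w (fun i => - a * mxv N L (d t) i + - c * w t i))]; auto.
  - rewrite cdot_linr, cdot_mxv, (bilin_sym (w t)). ring.
Qed.

Lemma swing_lyapunov_le : exists K, 0 < K /\ forall x y,
  swing_cost x y + swing_energy x y <= K * (alpha * bilin N L x x + 2 * c * cdot N y y).
Proof.
  set (k1 := alpha / (2 * a * c)). set (k2 := alpha / (2 * c)).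
  assert (Hk1 : 0 < k1) by (apply Rdiv_lt_0_compat; nra).
  assert (Hk2 : 0 < k2) by (apply Rdiv_lt_0_compat; nra).
  set (K1 := 2 * k1 * c ^ 2 / nu + k2 + a). set (K2 := 2 * k1 + 1).
  assert (HK1 : 0 < K1).
  { assert (0 < 2 * k1 * c ^ 2) by (pose proof (pow_lt c 2 Hc); nra).
    pose proof (Rdiv_lt_0_compat (2 * k1 * c ^ 2) nu ltac:(lra) Hnu). unfold K1. lra. }
  assert (HK2 : 0 < K2) by (unfold K2; lra).
  exists (K1 / alpha + K2 / (2 * c)). split.
  { pose proof (Rdiv_lt_0_compat K1 alpha HK1 Halpha).
    pose proof (Rdiv_lt_0_compat K2 (2 * c) HK2 ltac:(lra)). lra. }
  intros x y.
  assert (Hcomb : cdot N (fun i => c * x i + y i) (fun i => c * x i + y i)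
                  <= 2 * c ^ 2 / nu * bilin N L x x + 2 * cdot N y y).
  { pose proof (cdot_add_self_le N HN (fun i => c * x i) y) as Hle.
    rewrite cdot_scall, cdot_scalr in Hle.
    enough (c * (c * cdot N x x) <= c ^ 2 / nu * bilin N L x x) by lra.
    pose proof (Lgap x). apply (Rmult_le_reg_l nu); [exact Hnu|].
    replace (nu * (c ^ 2 / nu * bilin N L x x)) with (c ^ 2 * bilin N L x x) by (field; lra).
    pose proof (pow2_ge_0 c). nra. }
  pose proof (bilin_self_ge0 x). pose proof (cdot_self_ge0 N HN y).
  assert (Hcost : swing_cost x y + swing_energy x y <= K1 * bilin N L x x + K2 * cdot N y y).
  { unfold swing_cost, swing_energy. fold k1 k2.
    pose proof (Rmult_le_compat_l k1 _ _ (Rlt_le _ _ Hk1) Hcomb).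
    unfold K1, K2. unfold Rdiv in *. nra. }
  assert (0 <= K1 / alpha * (2 * c * cdot N y y)).
  { apply Rmult_le_pos; [apply Rlt_le, Rdiv_lt_0_compat|]; nra. }
  assert (0 <= K2 / (2 * c) * (alpha * bilin N L x x)).
  { apply Rmult_le_pos; [apply Rlt_le, Rdiv_lt_0_compat|]; nra. }
  replace ((K1 / alpha + K2 / (2 * c)) * (alpha * bilin N L x x + 2 * c * cdot N y y))
    with (K1 * bilin N L x x + K2 * cdot N y y + K1 / alpha * (2 * c * cdot N y y)
          + K2 / (2 * c) * (alpha * bilin N L x x)) by (field; lra).
  lra.
Qed.

Lemma swing_eventually_small :
  eventually_small (fun t => swing_cost (d t) (w t) + swing_energy (d t) (w t)).
Proof.
  destruct swing_lyapunov_le as [K [HK HKle]].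
  apply (eventually_small_le _
    (fun T => (swing_cost (d 0) (w 0) + swing_energy (d 0) (w 0)) * exp (- / K * T))).
  - apply (gronwall_exp (fun t => swing_cost (d t) (w t) + swing_energy (d t) (w t))
      (fun t => - alpha * bilin N L (d t) (d t) + - 2 * c * cdot N (w t) (w t)) (/ K)).
    + intros t. apply derivable_pt_lim_plus; [apply swing_cost_derive | apply swing_energy_derive].
    + intros t _. pose proof (HKle (d t) (w t)) as Hle.
      apply (Rmult_le_compat_l (/ K)) in Hle; [|apply Rlt_le, Rinv_0_lt_compat, HK].
      rewrite <- Rmult_assoc, Rinv_l, Rmult_1_l in Hle by lra. lra.
  - apply eventually_small_exp, Rinv_0_lt_compat, HK.
Qed.

End Swing.

Section Voltage.
Variables alpha p r mu : R.
Hypothesis Halpha : 0 < alpha.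
Hypothesis Hp : 0 < p.
Hypothesis Hr : 0 < r.
Hypothesis Hmu : 0 < mu.
Variable v : R -> nat -> R.
Hypothesis v_deriv : forall t i, (i < N)%nat ->
  derivable_pt_lim (fun s => v s i) t (- p * v t i + - r * mxv N L (v t) i).

(* Mode by mode, the cost of [v] is [alpha / 2 * f lambda * |v|^2] with
   [f lambda = lambda / (p + r lambda)], which is concave and increasing:
   [voltage_upper] replaces [f] by its tangent line at [mu], and
   [voltage_lower] by its value at the spectral gap [nu]. *)
Definition voltage_upper (x : nat -> R) : R :=
  alpha / 2 * (r * mu ^ 2 / (p + r * mu) ^ 2 * cdot N x x
               + p / (p + r * mu) ^ 2 * bilin N L x x).

Definition voltage_lower (x : nat -> R) : R := alpha / 2 * (nu / (p + r * nu)) * cdot N x x.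

Lemma voltage_upper_ge0 x : 0 <= voltage_upper x.
Proof.
  unfold voltage_upper. pose proof (cdot_self_ge0 N HN x). pose proof (bilin_self_ge0 x).
  assert (HD : 0 < (p + r * mu) ^ 2) by (apply pow_lt; nra).
  assert (0 <= r * mu ^ 2 / (p + r * mu) ^ 2).
  { apply Rlt_le, Rdiv_lt_0_compat; [pose proof (pow_lt mu 2 Hmu); nra | exact HD]. }
  assert (0 <= p / (p + r * mu) ^ 2) by (apply Rlt_le, Rdiv_lt_0_compat; lra).
  apply Rmult_le_pos; [lra|]. apply Rplus_le_le_0_compat; apply Rmult_le_pos; lra.
Qed.

Lemma cdot_voltage_derive t : derivable_pt_lim (fun s => cdot N (v s) (v s)) t
  (- 2 * p * cdot N (v t) (v t) - 2 * r * bilin N L (v t) (v t)).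
Proof.
  eapply derivable_pt_lim_eq.
  - apply (cdot_self_derive v (fun i => - p * v t i + - r * mxv N L (v t) i)). auto.
  - rewrite cdot_linr, cdot_mxv. ring.
Qed.

Lemma bilin_voltage_derive t : derivable_pt_lim (fun s => bilin N L (v s) (v s)) t
  (- 2 * p * bilin N L (v t) (v t)
   - 2 * r * cdot N (mxv N L (v t)) (mxv N L (v t))).
Proof.
  eapply derivable_pt_lim_eq.
  - apply (bilin_self_derive v (fun i => - p * v t i + - r * mxv N L (v t) i)). auto.
  - rewrite bilin_linr, cdot_mxv, (bilin_sym (mxv N L (v t))). ring.
Qed.

Lemma voltage_upper_derive t : derivable_pt_lim (fun s => voltage_upper (v s)) t
  (- alpha * bilin N L (v t) (v t)
   - alpha * r * p / (p + r * mu) ^ 2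
     * cdot N (fun i => mxv N L (v t) i + - mu * v t i)
              (fun i => mxv N L (v t) i + - mu * v t i)).
Proof.
  unfold voltage_upper. eapply derivable_pt_lim_eq.
  - apply derivable_pt_lim_scal, derivable_pt_lim_plus; apply derivable_pt_lim_scal;
      [apply cdot_voltage_derive | apply bilin_voltage_derive].
  - rewrite (cdot_add_self N (mxv N L (v t)) (fun i => - mu * v t i)), cdot_scalr, cdot_scall,
      cdot_scalr, (cdot_sym _ (mxv N L (v t)) (v t)), !cdot_mxv.
    assert (0 < p + r * mu) by nra. field. lra.
Qed.

Lemma voltage_lower_derive t : derivable_pt_lim (fun s => voltage_lower (v s)) t
  (- alpha * bilin N L (v t) (v t)
   + alpha * p / (p + r * nu) * (bilin N L (v t) (v t) - nu * cdot N (v t) (v t))).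
Proof.
  unfold voltage_lower. eapply derivable_pt_lim_eq.
  - apply derivable_pt_lim_scal, cdot_voltage_derive.
  - assert (0 < p + r * nu) by nra. field. lra.
Qed.

Lemma voltage_lower_eventually_small : eventually_small (fun t => voltage_lower (v t)).
Proof.
  apply (eventually_small_le _ (fun T => voltage_lower (v 0) * exp (- (2 * p) * T))).
  - intros T HT. unfold voltage_lower. rewrite (Rmult_assoc (alpha / 2 * (nu / (p + r * nu)))).
    apply Rmult_le_compat_l.
    { apply Rmult_le_pos; [lra | apply Rlt_le, Rdiv_lt_0_compat; nra]. }
    apply (gronwall_exp (fun t => cdot N (v t) (v t))
      (fun t => - 2 * p * cdot N (v t) (v t) - 2 * r * bilin N L (v t) (v t))); auto.
    + apply cdot_voltage_derive.
    + intros t _. pose proof (bilin_self_ge0 (v t)). nra.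
  - apply eventually_small_exp. lra.
Qed.

End Voltage.
End Dynamics.

Lemma fold_right_Rmin_le x l y : In y (x :: l) -> fold_right Rmin x l <= y.
Proof.
  induction l as [|z l IH]; simpl; intros Hy.
  - destruct Hy as [<-|[]]. lra.
  - pose proof (Rmin_l z (fold_right Rmin x l)). pose proof (Rmin_r z (fold_right Rmin x l)).
    destruct Hy as [<-|[<-|Hy]].
    + pose proof (IH (or_introl eq_refl)). lra.
    + lra.
    + pose proof (IH (or_intror Hy)). lra.
Qed.

Lemma fold_right_Rmin_In x l : In (fold_right Rmin x l) (x :: l).
Proof.
  induction l as [|z l IH]; simpl; auto.
  destruct (Rle_dec z (fold_right Rmin x l)).
  - rewrite Rmin_left by auto. simpl. auto.
  - rewrite Rmin_right by lra. destruct IH as [H|H]; simpl; auto.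
Qed.

Lemma fold_right_Rplus_gt0 l :
  l <> [] -> (forall x, In x l -> 0 < x) -> 0 < fold_right Rplus 0 l.
Proof.
  induction l as [|x [|y l] IH]; intros Hne Hpos; [easy | |].
  - simpl. rewrite Rplus_0_r. apply Hpos. now left.
  - simpl in *. pose proof (Hpos x (or_introl eq_refl)).
    assert (0 < y + fold_right Rplus 0 l) by (apply IH; [easy | intros; apply Hpos; auto]).
    lra.
Qed.

Lemma fold_right_Rplus_map_filter {A} (h : A -> R) (P : A -> bool) l :
  fold_right Rplus 0 (map h (filter P l))
  = fold_right Rplus 0 (map (fun x => if P x then h x else 0) l).
Proof. induction l as [|x l IH]; simpl; auto. destruct (P x); simpl; rewrite IH; lra. Qed.

Lemma fold_right_Rplus_map_prod {A B} (h : A * B -> R) l l' :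
  fold_right Rplus 0 (map h (list_prod l l'))
  = fold_right Rplus 0 (map (fun x => fold_right Rplus 0 (map (fun y => h (x, y)) l')) l).
Proof.
  induction l as [|x l IH]; simpl; auto.
  rewrite map_app, fold_right_app, fold_right_Rplus_init, IH, map_map. ring.
Qed.

Lemma edge_weights_In N b i k :
  (i < k)%nat -> (k < N)%nat -> In (b i k) (edge_weights N b).
Proof.
  intros. apply (in_map (fun p => b (fst p) (snd p)) _ (i, k)).
  apply filter_In. split; [apply in_prod; apply in_seq; lia | apply Nat.ltb_lt; auto].
Qed.

Lemma In_edge_weights N b x :
  In x (edge_weights N b) -> exists i k, (i < k)%nat /\ (k < N)%nat /\ x = b i k.
Proof.
  intros Hx. apply in_map_iff in Hx as [[i k] [<- Hik]].
  apply filter_In in Hik as [Hik Hlt]. apply in_prod_iff in Hik as [_ Hk].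
  apply in_seq in Hk. apply Nat.ltb_lt in Hlt. exists i, k. simpl in *. repeat split; auto; lia.
Qed.

Lemma sum_edge_weights N b : fold_right Rplus 0 (edge_weights N b)
  = fsum N (fun i => fsum N (fun k => if Nat.ltb i k then b i k else 0)).
Proof.
  unfold edge_weights, pairs.
  rewrite fold_right_Rplus_map_filter, fold_right_Rplus_map_prod. reflexivity.
Qed.

Section Edges.
Variable N : nat.
Variable b : mat.
Hypothesis HN : (2 <= N)%nat.
Hypothesis bpos : forall i k, (i < N)%nat -> (k < N)%nat -> i <> k -> 0 < b i k.
Hypothesis bsym : forall i k, (i < N)%nat -> (k < N)%nat -> b i k = b k i.

Lemma edge_weights_cons : exists x l, edge_weights N b = x :: l.
Proof.
  pose proof (edge_weights_In N b 0 1 ltac:(lia) ltac:(lia)) as H01.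
  destruct (edge_weights N b) as [|x l]; [destruct H01 | eauto].
Qed.

Lemma bmin_le i k : (i < N)%nat -> (k < N)%nat -> i <> k -> bmin N b <= b i k.
Proof.
  intros Hi Hk Hik. destruct edge_weights_cons as [x [l E]]. unfold bmin. rewrite E.
  apply fold_right_Rmin_le. rewrite <- E.
  destruct (Nat.lt_ge_cases i k).
  - now apply edge_weights_In.
  - rewrite bsym by auto. apply edge_weights_In; lia.
Qed.

Lemma bmin_is_weight : exists i k, (i < k)%nat /\ (k < N)%nat /\ bmin N b = b i k.
Proof.
  destruct edge_weights_cons as [x [l E]]. unfold bmin. rewrite E.
  apply In_edge_weights. rewrite E. apply fold_right_Rmin_In.
Qed.

Lemma bmin_gt0 : 0 < bmin N b.
Proof. destruct bmin_is_weight as [i [k [Hik [Hk ->]]]]. apply bpos; lia. Qed.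

Lemma INR_N_ge2 : 2 <= INR N.
Proof. apply (le_INR 2). exact HN. Qed.

Lemma bmean_gt0 : 0 < bmean N b.
Proof.
  pose proof INR_N_ge2. unfold bmean. apply Rdiv_lt_0_compat; [|nra].
  destruct edge_weights_cons as [x [l E]]. apply fold_right_Rplus_gt0; [congruence|].
  intros y Hy. apply In_edge_weights in Hy as [i [k [Hik [Hk ->]]]]. apply bpos; lia.
Qed.

Lemma lap_trace : fsum N (fun i => lap N b i i) = (INR N - 1) * (INR N * bmean N b).
Proof.
  pose proof INR_N_ge2.
  assert (Htr : fsum N (fun i => lap N b i i) = 2 * fold_right Rplus 0 (edge_weights N b)).
  { rewrite sum_edge_weights, (fsum_ext N _ (fun i =>
      fsum N (fun k => if Nat.ltb i k then b i k else 0)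
      + fsum N (fun k => if Nat.ltb k i then b k i else 0))).
    - rewrite fsum_plus, (fsum_swap N N (fun i k => if Nat.ltb k i then b k i else 0)). ring.
    - intros i Hi. unfold lap. rewrite Nat.eqb_refl, <- fsum_plus.
      apply fsum_ext. intros k Hk.
      destruct (Nat.eqb_spec k i), (Nat.ltb_spec i k), (Nat.ltb_spec k i); try lia; try lra.
      rewrite bsym by auto. ring. }
  rewrite Htr. unfold bmean. field. lra.
Qed.

Section ConstantWeights.
Variable beta : R.
Hypothesis bconst : forall i k, (i < N)%nat -> (k < N)%nat -> i <> k -> b i k = beta.

Lemma bmin_const : bmin N b = beta.
Proof. destruct bmin_is_weight as [i [k [Hik [Hk ->]]]]. apply bconst; lia. Qed.

Lemma bmean_const : bmean N b = beta.
Proof.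
  pose proof INR_N_ge2.
  assert (Htr : fsum N (fun i => lap N b i i) = INR N * ((INR N - 1) * beta)).
  { rewrite <- fsum_const. apply fsum_ext. intros i Hi. unfold lap. rewrite Nat.eqb_refl.
    rewrite (fsum_ext N _ (fun k => beta + - (if Nat.eqb i k then beta else 0))).
    - rewrite fsum_plus, fsum_opp, fsum_const, fsum_eqb by exact Hi. ring.
    - intros k Hk. destruct (Nat.eqb_spec k i), (Nat.eqb_spec i k); try lia.
      + ring.
      + rewrite bconst by auto. ring. }
  rewrite lap_trace in Htr.
  apply (Rmult_eq_reg_l (INR N * (INR N - 1))); [lra | nra].
Qed.

End ConstantWeights.
End Edges.

(** * The state-space system *)

Lemma block_index0 N i : (i < N)%nat -> Nat.div i N = 0%nat /\ Nat.modulo i N = i.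
Proof.
  intros. split; symmetry; [apply (Nat.div_unique i N 0 i) | apply (Nat.mod_unique i N 0 i)]; lia.
Qed.

Lemma block_index1 N i : (i < N)%nat -> Nat.div (N + i) N = 1%nat /\ Nat.modulo (N + i) N = i.
Proof.
  intros. split; symmetry; [apply (Nat.div_unique _ N 1 i) | apply (Nat.mod_unique _ N 1 i)]; lia.
Qed.

Lemma block_index2 N i :
  (i < N)%nat -> Nat.div (2 * N + i) N = 2%nat /\ Nat.modulo (2 * N + i) N = i.
Proof.
  intros. split; symmetry; [apply (Nat.div_unique _ N 2 i) | apply (Nat.mod_unique _ N 2 i)]; lia.
Qed.

Ltac simpl_block_index :=
  repeat match goal with
  | H : (?i < ?N)%nat |- context [Nat.div (2 * ?N + ?i) ?N] =>
      rewrite (proj1 (block_index2 N i H))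
  | H : (?i < ?N)%nat |- context [Nat.modulo (2 * ?N + ?i) ?N] =>
      rewrite (proj2 (block_index2 N i H))
  | H : (?i < ?N)%nat |- context [Nat.div (?N + ?i) ?N] =>
      rewrite (proj1 (block_index1 N i H))
  | H : (?i < ?N)%nat |- context [Nat.modulo (?N + ?i) ?N] =>
      rewrite (proj2 (block_index1 N i H))
  | H : (?i < ?N)%nat |- context [Nat.div ?i ?N] =>
      rewrite (proj1 (block_index0 N i H))
  | H : (?i < ?N)%nat |- context [Nat.modulo ?i ?N] =>
      rewrite (proj2 (block_index0 N i H))
  end.

Section StateSpace.
Variable N : nat.
Variable b : mat.
Variables kP tauP kQ tauQ cQ : R.
Variable Phi : R -> mat.
Hypothesis HN : (1 <= N)%nat.
Hypothesis Htr : is_transition (3 * N) (Asys N b kP tauP kQ tauQ cQ) Phi.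

Local Notation A := (Asys N b kP tauP kQ tauQ cQ).
Local Notation B := (Bsys N tauP tauQ).
Local Notation L := (lap N b).

Definition response (j : nat) (t : R) (k : nat) : R := fsum (3 * N) (fun l => Phi t k l * B l j).
Definition angle j t i := response j t i.
Definition freq j t i := response j t (N + i).
Definition volt j t i := response j t (2 * N + i).

Lemma response_derive j t k : (k < 3 * N)%nat ->
  derivable_pt_lim (fun s => response j s k) t (fsum (3 * N) (fun m => A k m * response j t m)).
Proof.
  intros Hk. destruct Htr as [_ HPhi]. unfold response. eapply derivable_pt_lim_eq.
  - apply (fsum_derive (3 * N) (fun s l => Phi s k l * B l j)
       (fun l => fsum (3 * N) (fun m => A k m * Phi t m l) * B l j)).
    intros l Hl. eapply derivable_pt_lim_eq.
    + apply (derivable_pt_lim_mult (fun s => Phi s k l) (fun _ => B l j));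
        [apply HPhi; auto | apply derivable_pt_lim_const].
    + ring.
  - transitivity (fsum (3 * N) (fun l => fsum (3 * N) (fun m => A k m * Phi t m l * B l j))).
    + apply fsum_ext. intros. rewrite Rmult_comm, <- fsum_scal. apply fsum_ext. intros. ring.
    + rewrite fsum_swap. apply fsum_ext. intros. rewrite <- fsum_scal.
      apply fsum_ext. intros. ring.
Qed.

Local Ltac block_entry := intros; simpl_block_index; unfold angle, freq, volt; ring.

Lemma angle_derive j t i : (i < N)%nat ->
  derivable_pt_lim (fun s => angle j s i) t (freq j t i).
Proof.
  intros Hi. eapply derivable_pt_lim_eq; [apply response_derive; lia|].
  rewrite fsum_blocks3. unfold Asys. cbv zeta.
  rewrite (fsum_ext N _ (fun _ => 0)),
    (fsum_ext N (fun r => _ * response j t (N + r)) (fun r => idm i r * freq j t r)),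
    (fsum_ext N (fun r => _ * response j t (2 * N + r)) (fun _ => 0)),
    fsum_idm_l, !fsum_zero by (auto; block_entry).
  ring.
Qed.

Lemma freq_derive j t i : (i < N)%nat ->
  derivable_pt_lim (fun s => freq j s i) t
    (- (kP / tauP) * mxv N L (angle j t) i + - (1 / tauP) * freq j t i).
Proof.
  intros Hi. eapply derivable_pt_lim_eq; [apply response_derive; lia|].
  rewrite fsum_blocks3. unfold Asys. cbv zeta.
  rewrite (fsum_ext N _ (fun r => - (kP / tauP) * (L i r * angle j t r))),
    (fsum_ext N (fun r => _ * response j t (N + r))
       (fun r => - (1 / tauP) * (idm i r * freq j t r))),
    (fsum_ext N (fun r => _ * response j t (2 * N + r)) (fun _ => 0)),
    !fsum_scal, fsum_idm_l, fsum_zero by (auto; block_entry).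
  unfold mxv. ring.
Qed.

Lemma volt_derive j t i : (i < N)%nat ->
  derivable_pt_lim (fun s => volt j s i) t
    (- (cQ / tauQ) * volt j t i + - (kQ / tauQ) * mxv N L (volt j t) i).
Proof.
  intros Hi. eapply derivable_pt_lim_eq; [apply response_derive; lia|].
  rewrite fsum_blocks3. unfold Asys. cbv zeta.
  rewrite (fsum_ext N _ (fun _ => 0)),
    (fsum_ext N (fun r => _ * response j t (N + r)) (fun _ => 0)),
    (fsum_ext N (fun r => _ * response j t (2 * N + r))
       (fun r => - (cQ / tauQ) * (idm i r * volt j t r)
                 + - (kQ / tauQ) * (L i r * volt j t r))),
    fsum_plus, !fsum_scal, fsum_idm_l, !fsum_zero by (auto; block_entry).
  unfold mxv. ring.
Qed.

Lemma response_0 j k : (k < 3 * N)%nat -> response j 0 k = B k j.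
Proof.
  intros Hk. destruct Htr as [HPhi0 _]. unfold response.
  rewrite (fsum_ext _ _ (fun l => idm k l * B l j)), fsum_idm_l
    by (auto; intros; rewrite HPhi0; auto).
  reflexivity.
Qed.

Lemma response_0_P j i : (j < N)%nat -> (i < N)%nat ->
  angle j 0 i = 0 /\ freq j 0 i = 1 / tauP * idm i j /\ volt j 0 i = 0.
Proof.
  intros Hj Hi. unfold angle, freq, volt. rewrite !response_0 by lia.
  unfold Bsys. cbv zeta. simpl_block_index. auto.
Qed.

Lemma response_0_Q j i : (j < N)%nat -> (i < N)%nat ->
  angle (N + j) 0 i = 0 /\ freq (N + j) 0 i = 0 /\ volt (N + j) 0 i = 1 / tauQ * idm i j.
Proof.
  intros Hj Hi. unfold angle, freq, volt. rewrite !response_0 by lia.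
  unfold Bsys. cbv zeta. simpl_block_index. auto.
Qed.

Variable alpha : R.
Variable S : mat.
Hypothesis Halpha : 0 <= alpha.
Hypothesis Ssym : forall i j, (i < N)%nat -> (j < N)%nat -> S i j = S j i.
Hypothesis Ssq : forall i j, (i < N)%nat -> (j < N)%nat -> fsum N (fun k => S i k * S k j) = L i j.

Local Notation C := (Csys N alpha S).

Lemma impulse_response t i j :
  impulse (3 * N) C Phi B t i j = fsum (3 * N) (fun k => C i k * response j t k).
Proof.
  unfold impulse, response. apply fsum_ext. intros. rewrite <- fsum_scal.
  apply fsum_ext. intros. ring.
Qed.

Lemma impulse_angle t i j : (i < N)%nat ->
  impulse (3 * N) C Phi B t i j = sqrt alpha * mxv N S (angle j t) i.
Proof.
  intros Hi. rewrite impulse_response, fsum_blocks3. unfold Csys. cbv zeta.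
  rewrite (fsum_ext N _ (fun r => sqrt alpha * (S i r * angle j t r))),
    (fsum_ext N (fun r => _ * response j t (N + r)) (fun _ => 0)),
    (fsum_ext N (fun r => _ * response j t (2 * N + r)) (fun _ => 0)),
    fsum_scal, !fsum_zero by block_entry.
  unfold mxv. ring.
Qed.

Lemma impulse_volt t i j : (i < N)%nat ->
  impulse (3 * N) C Phi B t (N + i)%nat j = sqrt alpha * mxv N S (volt j t) i.
Proof.
  intros Hi. rewrite impulse_response, fsum_blocks3. unfold Csys. cbv zeta.
  rewrite (fsum_ext N _ (fun _ => 0)),
    (fsum_ext N (fun r => _ * response j t (N + r)) (fun _ => 0)),
    (fsum_ext N (fun r => _ * response j t (2 * N + r))
       (fun r => sqrt alpha * (S i r * volt j t r))),
    fsum_scal, !fsum_zero by block_entry.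
  unfold mxv. ring.
Qed.

Lemma impulse_sq_sum t :
  fsum (2 * N) (fun i => fsum (2 * N) (fun j => impulse (3 * N) C Phi B t i j ^ 2))
  = fsum (2 * N) (fun j =>
      alpha * (bilin N L (angle j t) (angle j t) + bilin N L (volt j t) (volt j t))).
Proof.
  rewrite fsum_swap. apply fsum_ext. intros j _. rewrite fsum_blocks2.
  assert (Hsq : forall x, (sqrt alpha * x) ^ 2 = alpha * x ^ 2).
  { intros. rewrite Rpow_mult_distr, pow2_sqrt by exact Halpha. reflexivity. }
  rewrite (fsum_ext N _ (fun i => alpha * mxv N S (angle j t) i ^ 2))
    by (intros; rewrite impulse_angle; auto).
  rewrite (fsum_ext N (fun i => impulse (3 * N) C Phi B t (N + i)%nat j ^ 2)
             (fun i => alpha * mxv N S (volt j t) i ^ 2))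
    by (intros; rewrite impulse_volt; auto).
  rewrite !fsum_scal, !(sum_sq_mxv_sqrt N S L) by auto. ring.
Qed.

End StateSpace.

(** * Bounds on the H2 norm *)

Section H2Bounds.
Variable N : nat.
Variable b : mat.
Variables kP tauP kQ tauQ cQ alpha : R.
Variable S : mat.
Variable Phi : R -> mat.
Hypothesis HN : (2 <= N)%nat.
Hypothesis bpos : forall i k, (i < N)%nat -> (k < N)%nat -> i <> k -> 0 < b i k.
Hypothesis bsym : forall i k, (i < N)%nat -> (k < N)%nat -> b i k = b k i.
Hypothesis HkP : 0 < kP.
Hypothesis HtauP : 0 < tauP.
Hypothesis HkQ : 0 < kQ.
Hypothesis HtauQ : 0 < tauQ.
Hypothesis HcQ : 0 < cQ.
Hypothesis Halpha : 0 < alpha.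
Hypothesis Ssym : forall i j, (i < N)%nat -> (j < N)%nat -> S i j = S j i.
Hypothesis Ssq : forall i j, (i < N)%nat -> (j < N)%nat ->
  fsum N (fun k => S i k * S k j) = lap N b i j.
Hypothesis Htr : is_transition (3 * N) (Asys N b kP tauP kQ tauQ cQ) Phi.

Local Notation L := (lap N b).
Local Notation a := (kP / tauP).
Local Notation c := (1 / tauP).
Local Notation p := (cQ / tauQ).
Local Notation r := (kQ / tauQ).
Local Notation nu := (INR N * bmin N b).
Local Notation mu := (INR N * bmean N b).
Local Notation D j := (angle N tauP tauQ Phi j).
Local Notation W j := (freq N tauP tauQ Phi j).
Local Notation V j := (volt N tauP tauQ Phi j).

Let HN1 : (1 <= N)%nat. Proof. lia. Qed.
Let Ha : 0 < a. Proof. now apply Rdiv_lt_0_compat. Qed.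
Let Hc : 0 < c. Proof. apply Rdiv_lt_0_compat; lra. Qed.
Let Hp : 0 < p. Proof. now apply Rdiv_lt_0_compat. Qed.
Let Hr : 0 < r. Proof. now apply Rdiv_lt_0_compat. Qed.
Let Hnu : 0 < nu.
Proof. apply Rmult_lt_0_compat; [apply INR_N_gt0, HN1 | apply bmin_gt0; auto]. Qed.
Let Hmu : 0 < mu.
Proof. apply Rmult_lt_0_compat; [apply INR_N_gt0, HN1 | apply bmean_gt0; auto]. Qed.
Let L_sym : forall i k, (i < N)%nat -> (k < N)%nat -> L i k = L k i.
Proof. now apply lap_sym. Qed.
Let L_row : forall i, (i < N)%nat -> fsum N (L i) = 0.
Proof. now apply lap_row_sum0. Qed.
Let L_gap : forall u, nu * cdot N u u <= bilin N L u u.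
Proof. intros. apply bilin_lap_ge; auto. intros. now apply bmin_le. Qed.
Let D_deriv j t i : (i < N)%nat -> derivable_pt_lim (fun s => D j s i) t (W j t i).
Proof. eapply angle_derive; eauto. Qed.
Let W_deriv j t i : (i < N)%nat ->
  derivable_pt_lim (fun s => W j s i) t (- a * mxv N L (D j t) i + - c * W j t i).
Proof. eapply freq_derive; eauto. Qed.
Let V_deriv j t i : (i < N)%nat ->
  derivable_pt_lim (fun s => V j s i) t (- p * V j t i + - r * mxv N L (V j t) i).
Proof. eapply volt_derive; eauto. Qed.

Definition h2_integrand (t : R) : R :=
  fsum (2 * N) (fun j => alpha * (bilin N L (D j t) (D j t) + bilin N L (V j t) (V j t))).

Definition upper_lyap (t : R) : R := fsum (2 * N) (fun j =>
  swing_cost N L alpha a c (D j t) (W j t) + voltage_upper N L alpha p r mu (V j t)).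

Definition lower_lyap (t : R) : R := fsum (2 * N) (fun j =>
  swing_cost N L alpha a c (D j t) (W j t) + voltage_lower N nu alpha p r (V j t)).

Lemma h2_integrand_continuous t : continuity_pt h2_integrand t.
Proof.
  apply derivable_continuous_pt. eexists.
  apply (fsum_derive (2 * N) (fun s j => alpha * (bilin N L (D j s) (D j s)
                                               + bilin N L (V j s) (V j s)))).
  intros j _. apply derivable_pt_lim_scal, derivable_pt_lim_plus.
  - apply bilin_self_derive with (dv := W j t); auto.
  - apply bilin_self_derive with (dv := fun i => - p * V j t i + - r * mxv N L (V j t) i); auto.
Qed.

Lemma h2_integrand_ge0 t : 0 <= h2_integrand t.
Proof.
  apply fsum_nonneg. intros j _. pose proof (bilin_self_ge0 N L nu HN1 Hnu L_gap (D j t)).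
  pose proof (bilin_self_ge0 N L nu HN1 Hnu L_gap (V j t)). nra.
Qed.

Lemma upper_lyap_derive t : derivable_pt_lim upper_lyap t
  (- h2_integrand t - fsum (2 * N) (fun j => alpha * r * p / (p + r * mu) ^ 2
     * cdot N (fun i => mxv N L (V j t) i + - mu * V j t i)
              (fun i => mxv N L (V j t) i + - mu * V j t i))).
Proof.
  eapply derivable_pt_lim_eq.
  - apply (fsum_derive (2 * N) (fun s j => swing_cost N L alpha a c (D j s) (W j s)
                                        + voltage_upper N L alpha p r mu (V j s))).
    intros j _. apply derivable_pt_lim_plus;
      [apply (swing_cost_derive N L HN1 L_sym L_row alpha a c Ha Hc (D j) (W j))
      | apply (voltage_upper_derive N L HN1 L_sym L_row alpha p r mu Hp Hr Hmu (V j))]; auto.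
  - unfold h2_integrand. rewrite <- fsum_opp, <- fsum_minus. apply fsum_ext. intros. ring.
Qed.

Lemma lower_lyap_derive t : derivable_pt_lim lower_lyap t
  (- h2_integrand t + fsum (2 * N) (fun j => alpha * p / (p + r * nu)
     * (bilin N L (V j t) (V j t) - nu * cdot N (V j t) (V j t)))).
Proof.
  eapply derivable_pt_lim_eq.
  - apply (fsum_derive (2 * N) (fun s j => swing_cost N L alpha a c (D j s) (W j s)
                                        + voltage_lower N nu alpha p r (V j s))).
    intros j _. apply derivable_pt_lim_plus;
      [apply (swing_cost_derive N L HN1 L_sym L_row alpha a c Ha Hc (D j) (W j))
      | apply (voltage_lower_derive N L nu HN1 L_sym L_row Hnu alpha p r Hp Hr (V j))]; auto.
  - unfold h2_integrand. rewrite <- fsum_opp, <- fsum_plus. apply fsum_ext. intros. ring.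
Qed.

Lemma upper_lyap_ge0 t : 0 <= upper_lyap t.
Proof.
  apply fsum_nonneg. intros j _. apply Rplus_le_le_0_compat.
  - apply (swing_cost_ge0 N L nu HN1 Hnu L_gap); auto.
  - apply (voltage_upper_ge0 N L nu HN1 Hnu L_gap); auto.
Qed.

Lemma lower_lyap_eventually_small : eventually_small lower_lyap.
Proof.
  apply eventually_small_fsum. intros j _.
  apply (eventually_small_le _ (fun t =>
    (swing_cost N L alpha a c (D j t) (W j t) + swing_energy N L a (D j t) (W j t))
    + voltage_lower N nu alpha p r (V j t))).
  - intros t _. pose proof (swing_energy_ge0 N L nu HN1 Hnu L_gap a Ha (D j t) (W j t)). lra.
  - apply eventually_small_plus.
    + apply (swing_eventually_small N L nu HN1 L_sym L_row Hnu L_gap); auto.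
    + apply (voltage_lower_eventually_small N L nu HN1 L_sym L_row Hnu L_gap); auto.
Qed.

Lemma h2_norm_sq_between : exists v,
  H2_norm_sq (3 * N) (2 * N) (2 * N)
    (Asys N b kP tauP kQ tauQ cQ) (Bsys N tauP tauQ) (Csys N alpha S) Phi v /\
  lower_lyap 0 <= v <= upper_lyap 0.
Proof.
  assert (Hsandwich : exists v, has_integral_0_inf h2_integrand v /\
                              lower_lyap 0 <= v <= upper_lyap 0).
  { unshelve eapply (improper_integral_sandwich _ h2_integrand_continuous h2_integrand_ge0
      upper_lyap _ lower_lyap _ upper_lyap_derive _ (fun t _ => upper_lyap_ge0 t)
      lower_lyap_derive _ lower_lyap_eventually_small).
    - intros t _. enough (0 <= fsum (2 * N) (fun j => alpha * r * p / (p + r * mu) ^ 2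
        * cdot N (fun i => mxv N L (V j t) i + - mu * V j t i)
                 (fun i => mxv N L (V j t) i + - mu * V j t i))) by lra.
      apply fsum_nonneg. intros j _. apply Rmult_le_pos; [|apply cdot_self_ge0, HN1].
      apply Rlt_le, Rdiv_lt_0_compat; [|apply pow_lt; nra].
      apply Rmult_lt_0_compat; [apply Rmult_lt_0_compat|]; assumption.
    - intros s _. enough (0 <= fsum (2 * N) (fun j => alpha * p / (p + r * nu)
        * (bilin N L (V j s) (V j s) - nu * cdot N (V j s) (V j s)))) by lra.
      apply fsum_nonneg. intros j _. pose proof (L_gap (V j s)).
      apply Rmult_le_pos; [apply Rlt_le, Rdiv_lt_0_compat | ]; [nra | nra | lra]. }
  destruct Hsandwich as [v [Hv Hbounds]].
  exists v. split; [|exact Hbounds]. unfold H2_norm_sq.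
  replace (fun t => _) with h2_integrand; [exact Hv|].
  apply functional_extensionality. intros t. symmetry.
  apply impulse_sq_sum; auto; lra.
Qed.

Lemma columns_P_at_0 j : (j < N)%nat ->
  swing_cost N L alpha a c (D j 0) (W j 0) = alpha / (2 * a * c) * (c ^ 2 * (1 - 1 / INR N))
  /\ voltage_upper N L alpha p r mu (V j 0) = 0 /\ voltage_lower N nu alpha p r (V j 0) = 0.
Proof.
  intros Hj.
  pose proof (fun i Hi => response_0_P N b kP tauP kQ tauQ cQ Phi HN1 Htr j i Hj Hi) as H0.
  unfold swing_cost, voltage_upper, voltage_lower.
  rewrite (cdot_ext N _ (fun i => c * idm i j) _ (fun i => c * idm i j)),
    cdot_unit, (bilin_0l N L (D j 0)), (cdot_0l N (V j 0)), (bilin_0l N L (V j 0))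
    by (auto; intros i Hi; destruct (H0 i Hi) as (Hd & Hw & Hv); rewrite ?Hd, ?Hw, ?Hv; ring).
  repeat split; ring.
Qed.

Lemma columns_Q_at_0 j : (j < N)%nat ->
  swing_cost N L alpha a c (D (N + j)%nat 0) (W (N + j)%nat 0) = 0
  /\ voltage_upper N L alpha p r mu (V (N + j)%nat 0)
     = alpha / 2 * (r * mu ^ 2 / (p + r * mu) ^ 2 * ((1 / tauQ) ^ 2 * (1 - 1 / INR N))
                    + p / (p + r * mu) ^ 2 * ((1 / tauQ) ^ 2 * L j j))
  /\ voltage_lower N nu alpha p r (V (N + j)%nat 0)
     = alpha / 2 * (nu / (p + r * nu)) * ((1 / tauQ) ^ 2 * (1 - 1 / INR N)).
Proof.
  intros Hj.
  pose proof (fun i Hi => response_0_Q N b kP tauP kQ tauQ cQ Phi HN1 Htr j i Hj Hi) as H0.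
  unfold swing_cost, voltage_upper, voltage_lower.
  rewrite (cdot_0l N (fun i => c * D (N + j)%nat 0 i + W (N + j)%nat 0 i)),
    (bilin_0l N L (D (N + j)%nat 0)),
    (cdot_ext N _ (fun i => 1 / tauQ * idm i j) _ (fun i => 1 / tauQ * idm i j)),
    (bilin_ext N L _ (fun i => 1 / tauQ * idm i j) _ (fun i => 1 / tauQ * idm i j)),
    cdot_unit, bilin_unit
    by (auto; intros i Hi; destruct (H0 i Hi) as (Hd & Hw & Hv); rewrite ?Hd, ?Hw, ?Hv; ring).
  repeat split; ring.
Qed.

Lemma upper_lyap_at_0 :
  upper_lyap 0 = alpha / 2 * (INR N - 1) * (1 / kP + 1 / (tauQ * (cQ / mu + kQ))).
Proof.
  unfold upper_lyap. rewrite fsum_blocks2.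
  rewrite (fsum_ext N _ (fun _ => alpha / (2 * a * c) * (c ^ 2 * (1 - 1 / INR N)))) by
    (intros j Hj; destruct (columns_P_at_0 j Hj) as (-> & -> & _); ring).
  rewrite (fsum_ext N (fun j => swing_cost N L alpha a c (D (N + j)%nat 0) (W (N + j)%nat 0)
                               + voltage_upper N L alpha p r mu (V (N + j)%nat 0)) (fun j =>
      alpha / 2 * (r * mu ^ 2 / (p + r * mu) ^ 2 * ((1 / tauQ) ^ 2 * (1 - 1 / INR N)))
      + (alpha / 2 * (p / (p + r * mu) ^ 2) * (1 / tauQ) ^ 2) * L j j)) by
    (intros j Hj; destruct (columns_Q_at_0 j Hj) as (-> & -> & _); ring).
  rewrite fsum_plus, !fsum_scal, !fsum_const, lap_trace by auto.
  pose proof (INR_N_ge2 N HN). assert (0 < p + r * mu) by nra.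
  field. repeat split; try lra; nra.
Qed.

Lemma lower_lyap_at_0 :
  lower_lyap 0 = alpha / 2 * (INR N - 1) * (1 / kP + 1 / (tauQ * (cQ / nu + kQ))).
Proof.
  unfold lower_lyap. rewrite fsum_blocks2.
  rewrite (fsum_ext N _ (fun _ => alpha / (2 * a * c) * (c ^ 2 * (1 - 1 / INR N)))) by
    (intros j Hj; destruct (columns_P_at_0 j Hj) as (-> & _ & ->); ring).
  rewrite (fsum_ext N (fun j => swing_cost N L alpha a c (D (N + j)%nat 0) (W (N + j)%nat 0)
                               + voltage_lower N nu alpha p r (V (N + j)%nat 0)) (fun _ =>
      alpha / 2 * (nu / (p + r * nu)) * ((1 / tauQ) ^ 2 * (1 - 1 / INR N)))) by
    (intros j Hj; destruct (columns_Q_at_0 j Hj) as (-> & _ & ->); ring).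
  rewrite !fsum_const.
  pose proof (INR_N_ge2 N HN). assert (0 < p + r * nu) by nra.
  field. repeat split; try lra; nra.
Qed.

End H2Bounds.

Theorem theorem3 (N : nat) (b : nat -> nat -> R)
  (kP tauP kQ tauQ bbar alpha : R)
  (S : nat -> nat -> R) (Phi : R -> nat -> nat -> R) :
  (2 <= N)%nat ->
  (forall i k, (i < N)%nat -> (k < N)%nat -> i <> k -> 0 < b i k) ->
  (forall i k, (i < N)%nat -> (k < N)%nat -> b i k = b k i) ->
  0 < kP -> 0 < tauP -> 0 < kQ -> 0 < tauQ -> 0 <= bbar -> 0 < alpha ->
  is_psd_sqrt N S (lap N b) ->
  is_transition (3 * N) (Asys N b kP tauP kQ tauQ (1 + 2 * kQ * bbar)) Phi ->
  let cQ := 1 + 2 * kQ * bbar in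
  let lower := alpha / 2 * (INR N - 1) *
                 (1 / kP + 1 / (tauQ * (cQ / (INR N * bmin N b) + kQ))) in
  let upper := alpha / 2 * (INR N - 1) *
                 (1 / kP + 1 / (tauQ * (cQ / (INR N * bmean N b) + kQ))) in
  exists v,
    H2_norm_sq (3 * N) (2 * N) (2 * N)
      (Asys N b kP tauP kQ tauQ cQ) (Bsys N tauP tauQ) (Csys N alpha S) Phi v /\
    lower <= v <= upper /\
    ((forall i k, (i < N)%nat -> (k < N)%nat -> i <> k -> b i k = b 0%nat 1%nat) ->
       v = lower /\ v = upper).
Proof.
  intros HN bpos bsym HkP HtauP HkQ HtauQ Hbbar Halpha [Ssym [_ Ssq]] Htr cQ lower upper.
  assert (HcQ : 0 < cQ) by (unfold cQ; nra).
  destruct (h2_norm_sq_between N b kP tauP kQ tauQ cQ alpha S Phi HN bpos bsym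
    HkP HtauP HkQ HtauQ HcQ Halpha Ssym Ssq Htr) as [v [Hv Hbounds]].
  rewrite lower_lyap_at_0, upper_lyap_at_0 in Hbounds by auto.
  exists v. split; [exact Hv | split; [exact Hbounds |]].
  intros Hconst. unfold lower, upper in *.
  rewrite (bmin_const N b HN _ Hconst), (bmean_const N b HN bsym _ Hconst) in *. lra.
Qed.
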